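(* Let $S\subset\mathcal P$ be a rectangular lattice and let $\Delta$ be a bounded region of $\mathcal L_S$ which does not contain the origin $O$ of $\mathbb{R}^2$, with $n$ sides and sign sequence $D_k$, $k\in\mathbb{Z}/n\mathbb{Z}$, as in the context. Then there is no $k$ with $D_k=D_{k+1}=D_{k+2}$.
   Context: $\mathcal P=\mathbb{R}^2\setminus\{(0,0)\}$; for $P=(A,B)\in\mathcal P$, $L_P$ is the line $Ax+By=1$ in $\mathbb{R}^2$; $\mathcal L_S=\{L_P\mid P\in S\}$. A rectangular lattice is a set of the form $S=\{(a+k\delta_x,\,b+j\delta_y)\mid k,j\in\mathbb{Z},\ 0\le k\le N,\ 0\le j\le M\}\setminus\{(0,0)\}$, where $(a,b)\ne(0,0)$, $\delta_x,\delta_y>0$, $N,M\in\mathbb{Z}_{\ge0}$, and the corners $(a,b+M\delta_y)$, $(a+N\delta_x,b)$, $(a+N\delta_x,b+M\delta_y)$ are all different from $(0,0)$. Regions of $\mathcal L_S$ are closures of connected components of $\mathbb{R}^2\setminus\bigcup_{P\in S}L_P$. For a bounded region $\Delta$ with $n$ sides, $L_k$ ($k\in\mathbb{Z}/n\mathbb{Z}$) are the lines containing the sides of $\Delta$ in clockwise order around $\Delta$, and $D_k\in\{l,r\}$ is the side (left or right) of $L_k$ on which $O$ lies for a traveller moving along the side of $\Delta$ on $L_k$ clockwise around $\Delta$ (with $\Delta$ on the traveller's right). *)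

From HB Require Import structures.
From mathcomp Require Import all_boot all_order all_algebra.
From mathcomp Require Import all_classical all_reals all_analysis.
Set Implicit Arguments. Unset Strict Implicit. Unset Printing Implicit Defensive.
Import Order.TTheory GRing.Theory Num.Theory.
Import numFieldNormedType.Exports.
Local Open Scope classical_set_scope.
Local Open Scope ring_scope.

Section Defs.
Variable R : realType.

Local Notation pt := (R * R)%type.

Definition origin : pt := (0, 0).

Definition lineP (P : pt) : set pt := [set p : pt | P.1 * p.1 + P.2 * p.2 = 1].

Definition rect_lattice (S : set pt) : Prop :=
  exists (a b dx dy : R) (N M : nat),
    [/\ (a, b) <> origin, 0 < dx, 0 < dy,
        [/\ (a, b + M%:R * dy) <> origin, (a + N%:R * dx, b) <> origin
          & (a + N%:R * dx, b + M%:R * dy) <> origin] &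
        S = [set p : pt | exists k j : nat, [/\ (k <= N)%N, (j <= M)%N
                & p = (a + k%:R * dx, b + j%:R * dy)]] `\ origin].

Definition arr_complement (S : set pt) : set pt :=
  ~` (\bigcup_(P in S) lineP P).

Definition is_region (S : set pt) (D : set pt) : Prop :=
  exists x : pt, arr_complement S x /\
    D = closure (connected_component (arr_complement S) x).

Definition bounded_pt (D : set pt) : Prop :=
  exists M : R, forall p, D p -> `|p.1| <= M /\ `|p.2| <= M.

Definition is_line (L : set pt) : Prop :=
  exists a b c : R, (a, b) <> origin /\ L = [set p : pt | a * p.1 + b * p.2 = c].

(* L is the line containing a side (edge) of the convex polygon D:
   D lies in a closed half-plane bounded by L and D meets L in a
   nondegenerate segment (at least two distinct points). *)
Definition side_line (D : set pt) (L : set pt) : Prop :=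
  exists a b c : R,
    [/\ (a, b) <> origin, L = [set p : pt | a * p.1 + b * p.2 = c],
        (forall p, D p -> a * p.1 + b * p.2 <= c) &
        exists p q : pt, [/\ p <> q, D p, D q, L p & L q]].

Definition segment (u w : pt) : set pt :=
  [set p : pt | exists t : R, [/\ 0 <= t, t <= 1 &
     p = (u.1 + t * (w.1 - u.1), u.2 + t * (w.2 - u.2))]].

(* cross product of u and w; w lies to the right of direction u iff cross u w < 0 *)
Definition cross (u w : pt) : R := u.1 * w.2 - u.2 * w.1.

Definition vsub (u w : pt) : pt := (u.1 - w.1, u.2 - w.2).

(* L 0, ..., L (n-1) are the lines containing the sides of D, listed in
   clockwise order around D, and v k is the vertex at which a traveller
   going clockwise around D (with D on its right) enters the side on L k;
   so the side on L k is the segment from v k to v (k+1). *)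
Definition clockwise_sides (D : set pt) (n : nat)
    (L : 'I_n -> set pt) (v : 'I_n -> pt) : Prop :=
  [/\ injective L,
      (forall Lc, side_line D Lc <-> exists k, Lc = L k),
      (forall k, v k <> v (ordS k)),
      (forall k, D `&` L k = segment (v k) (v (ordS k))) &
      (forall k q, D q -> cross (vsub (v (ordS k)) (v k)) (vsub q (v k)) <= 0)].

Inductive lr := Left | Right.

(* D_k : the side (left/right) of L_k on which O lies, for the traveller
   moving from v k to v (k+1).  (O never lies on L_k: the value in the
   degenerate case cross = 0 is irrelevant.) *)
Definition side_of_O n (v : 'I_n -> pt) (k : 'I_n) : lr :=
  if cross (vsub (v (ordS k)) (v k)) (vsub origin (v k)) < 0 then Right else Left.

End Defs.

(* Write [fline P x = P.1 x.1 + P.2 x.2 - 1], so that [L_P] is the zero set of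
   [fline P], and let [s] be the common sign of three consecutive sides [L_P1],
   [L_P2], [L_P3] of the region, with vertices [w0, w1, w2, w3].  Then [s fline P_i]
   is nonnegative on the region.  Since the region is bounded and misses [O], some
   lattice line [L_Q] separates [x0] from the side prescribed by [s], so that
   [s fline Q <= 0] on the region.  Every lattice point [G] has [fline G] of constant
   sign on the region, in particular at the vertices [w_i]; writing
   [G = P2 + alpha (P1 - P2) + beta (P3 - P2)], this forces all lattice points into
   the double cone [alpha, beta >= 0 \/ alpha, beta < 0], with [Q] strictly in the
   negative part.  A rectangular lattice cannot do that: the neighbours of [P2] in
   the lattice put [P1 - P2] and [P3 - P2] in opposite quadrants, and then reflecting
   a coordinate of [P1] or [P3] through [P2] gives a lattice point outside the
   double cone. *)

From HB Require Import structures.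
From mathcomp Require Import all_boot all_order all_algebra.
From mathcomp Require Import all_classical all_reals all_analysis.
From mathcomp Require Import ring lra zify.
Set Implicit Arguments. Unset Strict Implicit. Unset Printing Implicit Defensive.
Import Order.TTheory GRing.Theory Num.Theory.
Import numFieldNormedType.Exports.
Local Open Scope classical_set_scope.
Local Open Scope ring_scope.

Section Grid.
Variables (R : realType) (a d : R) (N : nat).
Hypothesis d_gt0 : 0 < d.

Definition on_grid (x : R) := exists2 i : nat, (i <= N)%N & x = a + i%:R * d.

Let grid_ltr (i j : nat) : (a + i%:R * d < a + j%:R * d) = (i < j)%N.
Proof. by rewrite ltrD2l ltr_pM2r // ltr_nat. Qed.

Lemma on_grid_predl x y : on_grid x -> on_grid y -> y < x -> on_grid (x - d).
Proof.
move=> [i iN ->] [j _ ->]; rewrite grid_ltr => ji.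
exists i.-1; first by lia.
have -> : i%:R = i.-1%:R + 1 :> R by rewrite natr1 prednK //; lia.
ring.
Qed.

Lemma on_grid_succr x y : on_grid x -> on_grid y -> x < y -> on_grid (x + d).
Proof.
move=> [i _ ->] [j jN ->]; rewrite grid_ltr => ij.
by exists i.+1; [lia | rewrite -natr1; ring].
Qed.

(* [x1] and [x3] lie on opposite sides of [x2], with [x3] at least as far: the
   reflection of [x1] through [x2] then lies between [x2] and [x3]. *)
Lemma on_grid_reflect x1 x2 x3 : on_grid x1 -> on_grid x2 -> on_grid x3 ->
  (x1 - x2) * (x3 - x2) < 0 -> 0 <= (x1 - x2 + (x3 - x2)) * (x3 - x2) ->
  on_grid (2 * x2 - x1).
Proof.
move=> [i1 i1N ->] [i2 i2N ->] [i3 i3N ->].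
have diff (i j : nat) : a + i%:R * d - (a + j%:R * d) = (i%:R - j%:R) * d by ring.
have dd : 0 < d * d by rewrite mulr_gt0.
rewrite !diff -mulrDl.
have sq (x y : R) : x * d * (y * d) = x * y * (d * d) by ring.
rewrite !sq pmulr_llt0 // pmulr_lge0 // => opp far.
have between : (i1 <= i2 /\ i2 + i2 <= i3 + i1 \/ i2 <= i1 /\ i3 + i1 <= i2 + i2)%N.
  rewrite -!(ler_nat R) !natrD.
  have [i3_gt|i3_le] := ltP (i2%:R : R) i3%:R; [left | right]; nra.
exists (i2 + i2 - i1)%N; first by lia.
by rewrite natrB ?natrD; [ring | lia].
Qed.

End Grid.

Section Bicone.
Variable R : realType.
Local Notation pt := (R * R)%type.

(* Writing [X = alpha u + beta w], [cross X w] and [cross u X] are [alpha] and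
   [beta] times [cross u w]: [X] lies in the closed cone spanned by [u] and [w]
   or in the interior of its opposite. *)
Definition in_bicone (u w X : pt) :=
  [/\ 0 <= cross X w * cross u X,
      cross u X = 0 -> 0 <= cross X w * cross u w &
      cross X w = 0 -> 0 <= cross u X * cross u w].

Definition in_neg_cone (u w X : pt) :=
  cross X w * cross u w < 0 /\ cross u X * cross u w < 0.

Lemma crossC (u w : pt) : cross w u = - cross u w.
Proof. by rewrite /cross; ring. Qed.

Lemma cross_swap (u w : pt) : cross (u.2, u.1) (w.2, w.1) = - cross u w.
Proof. by rewrite /cross /=; ring. Qed.

Let oppr_eq0P (x : R) : (- x = 0) = (x = 0).
Proof. by rewrite propeqE; split=> [/eqP|->]; rewrite ?oppr0 // oppr_eq0 => /eqP. Qed.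

Lemma in_biconeC (u w X : pt) : in_bicone u w X -> in_bicone w u X.
Proof.
rewrite /in_bicone ![cross _ u]crossC ![cross w _]crossC !mulrNN !oppr_eq0P.
by case=> h1 h2 h3; split; rewrite // mulrC.
Qed.

Lemma in_bicone_swap (u w X : pt) :
  in_bicone u w X -> in_bicone (u.2, u.1) (w.2, w.1) (X.2, X.1).
Proof. by rewrite /in_bicone !cross_swap !mulrNN !oppr_eq0P. Qed.

Lemma in_bicone_opp_x (u w : pt) (d : R) : 0 < d -> cross u w != 0 ->
  in_bicone u w (d, 0) -> in_bicone u w (- d, 0) -> u.2 * w.2 < 0.
Proof.
case: u w => u1 u2 [w1 w2] d_gt0; rewrite /in_bicone /cross /= => c_neq0.
rewrite ?mulr0 ?mul0r ?subr0 ?sub0r => -[pos u2_0 w2_0] [pos' u2_0' w2_0'].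
have dd : 0 < d * d by rewrite mulr_gt0.
have le : u2 * w2 <= 0 by rewrite -(pmulr_lle0 _ dd); nra.
rewrite lt_neqAle le andbT mulf_eq0; apply/negP => /orP[]/eqP e.
- have := u2_0 ltac:(rewrite e; ring); have := u2_0' ltac:(rewrite e; ring) => k k'.
  have : w2 * (u1 * w2 - u2 * w1) = 0 by nra.
  move/eqP; rewrite mulf_eq0 (negbTE c_neq0) orbF => /eqP w2_0''.
  by move: c_neq0; rewrite e w2_0'' mulr0 mul0r subrr eqxx.
- have := w2_0 ltac:(rewrite e; ring); have := w2_0' ltac:(rewrite e; ring) => k k'.
  have : u2 * (u1 * w2 - u2 * w1) = 0 by nra.
  move/eqP; rewrite mulf_eq0 (negbTE c_neq0) orbF => /eqP u2_0''.
  by move: c_neq0; rewrite e u2_0'' mulr0 mul0r subrr eqxx.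
Qed.

Lemma in_bicone_opp_y (u w : pt) (d : R) : 0 < d -> cross u w != 0 ->
  in_bicone u w (0, d) -> in_bicone u w (0, - d) -> u.1 * w.1 < 0.
Proof.
move=> d_gt0 c_neq0 /in_bicone_swap pos /in_bicone_swap neg.
by apply: (in_bicone_opp_x d_gt0 _ pos neg); rewrite cross_swap oppr_eq0.
Qed.

Lemma not_in_bicone_oppw (u w : pt) : cross u w != 0 -> ~ in_bicone u w (- w.1, - w.2).
Proof.
case: u w => u1 u2 [w1 w2]; rewrite /in_bicone /cross /= => c_neq0 [_ _].
have -> : (u1 * - w2 - u2 * - w1) * (u1 * w2 - u2 * w1) = - (u1 * w2 - u2 * w1) ^+ 2.
  by ring.
by move=> /(_ ltac:(ring)); rewrite oppr_ge0 leNgt lt0r sqrf_eq0 c_neq0 sqr_ge0.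
Qed.

Lemma not_in_bicone_oppu (u w : pt) : cross u w != 0 -> ~ in_bicone u w (- u.1, - u.2).
Proof.
by move=> c_neq0 /in_biconeC; apply: not_in_bicone_oppw; rewrite crossC oppr_eq0.
Qed.

Let neg_sum_prod (x y : R) : x * y < 0 -> 0 < (x + y) * x -> (x + y) * y < 0.
Proof. by move=> xy sx; nra. Qed.

Lemma not_in_bicone_oppw1 (u w : pt) :
  u.1 * w.1 < 0 -> u.2 * w.2 < 0 -> 0 < (u.1 + w.1) * u.1 -> 0 < (u.2 + w.2) * w.2 ->
  ~ in_bicone u w (- w.1, u.2).
Proof.
case: u w => u1 u2 [w1 w2]; rewrite /in_bicone /cross /= => uw1 uw2 s1 s2 [+ _ _].
have t1 := neg_sum_prod uw1 s1.
have t2 : (w2 + u2) * u2 < 0 by apply: neg_sum_prod; [rewrite mulrC | rewrite addrC].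
have -> : (- w1 * w2 - u2 * w1) * (u1 * u2 - u2 * - w1)
    = - (((u1 + w1) * w1) * ((w2 + u2) * u2)) by ring.
by rewrite oppr_ge0 leNgt (nmulr_rgt0 _ t1) t2.
Qed.

Lemma not_in_bicone_oppw2 (u w : pt) :
  u.1 * w.1 < 0 -> u.2 * w.2 < 0 -> 0 < (u.1 + w.1) * w.1 -> 0 < (u.2 + w.2) * u.2 ->
  ~ in_bicone u w (u.1, - w.2).
Proof.
move=> uw1 uw2 s1 s2 /in_bicone_swap /=.
by apply: not_in_bicone_oppw1 => //=; rewrite mulrC.
Qed.

Lemma in_neg_cone_x (u w X : pt) : cross u w != 0 -> in_neg_cone u w X ->
  [\/ u.1 < 0, w.1 < 0 | X.1 < 0].
Proof.
case: u w X => u1 u2 [w1 w2] [X1 X2]; rewrite /in_neg_cone /cross /= => c_neq0 [Aneg Bneg].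
have [u1_lt0|u1_ge0] := ltP u1 0; first by constructor 1.
have [w1_lt0|w1_ge0] := ltP w1 0; first by constructor 2.
have [X1_lt0|X1_ge0] := ltP X1 0; first by constructor 3.
exfalso; set c := u1 * w2 - u2 * w1 in c_neq0 Aneg Bneg.
set A := (X1 * w2 - X2 * w1) * c in Aneg; set B := (u1 * X2 - u2 * X1) * c in Bneg.
have cX1 : c * c * X1 = A * u1 + B * w1 by rewrite /A /B /c; ring.
have cc : 0 < c * c by rewrite lt0r mulf_neq0 //= -expr2 sqr_ge0.
have u1_0 : u1 = 0 by nra.
have w1_0 : w1 = 0 by nra.
by move: c_neq0; rewrite /c u1_0 w1_0 mul0r mulr0 subrr eqxx.
Qed.

Lemma cross_oppx (u w : pt) : cross (- u.1, u.2) (- w.1, w.2) = - cross u w.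
Proof. by rewrite /cross /=; ring. Qed.

Lemma in_neg_cone_oppx (u w X : pt) : in_neg_cone u w X ->
  in_neg_cone (- u.1, u.2) (- w.1, w.2) (- X.1, X.2).
Proof. by rewrite /in_neg_cone !cross_oppx !mulrNN. Qed.

Lemma in_neg_cone_swap (u w X : pt) : in_neg_cone u w X ->
  in_neg_cone (u.2, u.1) (w.2, w.1) (X.2, X.1).
Proof. by rewrite /in_neg_cone !cross_swap !mulrNN. Qed.

End Bicone.

Section GridBicone.
Variables (R : realType) (a b dx dy : R) (N M : nat).
Hypotheses (dx_gt0 : 0 < dx) (dy_gt0 : 0 < dy).
Local Notation pt := (R * R)%type.
Local Notation grid G := (on_grid a dx N G.1 /\ on_grid b dy M G.2).
Variables P1 P2 P3 : pt.
Hypotheses (gP1 : grid P1) (gP2 : grid P2) (gP3 : grid P3).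
Local Notation u := (vsub P1 P2).
Local Notation w := (vsub P3 P2).
Hypothesis c_neq0 : cross u w != 0.
Hypothesis grid_bicone : forall G, grid G -> in_bicone u w (vsub G P2).

Let bicone_at (X : pt) : grid (P2.1 + X.1, P2.2 + X.2) -> in_bicone u w X.
Proof.
move=> /grid_bicone; congr in_bicone; case: X => X1 X2.
by rewrite /vsub /=; congr pair; ring.
Qed.

Let reflect_x (A B : pt) : on_grid a dx N A.1 -> on_grid a dx N B.1 ->
  (A.1 - P2.1) * (B.1 - P2.1) < 0 -> 0 <= (A.1 - P2.1 + (B.1 - P2.1)) * (B.1 - P2.1) ->
  on_grid a dx N (P2.1 + - (A.1 - P2.1)).
Proof.
move=> gA gB opp far; have -> : P2.1 + - (A.1 - P2.1) = 2 * P2.1 - A.1 by ring.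
exact: on_grid_reflect gA gP2.1 gB opp far.
Qed.

Let reflect_y (A B : pt) : on_grid b dy M A.2 -> on_grid b dy M B.2 ->
  (A.2 - P2.2) * (B.2 - P2.2) < 0 -> 0 <= (A.2 - P2.2 + (B.2 - P2.2)) * (B.2 - P2.2) ->
  on_grid b dy M (P2.2 + - (A.2 - P2.2)).
Proof.
move=> gA gB opp far; have -> : P2.2 + - (A.2 - P2.2) = 2 * P2.2 - A.2 by ring.
exact: on_grid_reflect gA gP2.2 gB opp far.
Qed.

Let shift_P1 : P2.1 + u.1 = P1.1 /\ P2.2 + u.2 = P1.2.
Proof. by rewrite /vsub /=; split; ring. Qed.

(* As [u.i] and [w.i] have opposite signs, [(u.i + w.i) * u.i >= 0] means
   [|u.i| >= |w.i|], and then the reflection of [P3.i] through [P2.i] is a grid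
   coordinate; symmetrically for [P1.i]. *)
Lemma grid_opposite_quadrants : u.1 * w.1 < 0 -> u.2 * w.2 < 0 -> False.
Proof.
move=> uw1 uw2; have [sx sy] := shift_P1.
have wu1 : w.1 * u.1 < 0 by rewrite mulrC.
have wu2 : w.2 * u.2 < 0 by rewrite mulrC.
have sq1 : 0 <= (u.1 + w.1) * u.1 + (u.1 + w.1) * w.1 by rewrite -mulrDr -expr2 sqr_ge0.
have sq2 : 0 <= (u.2 + w.2) * u.2 + (u.2 + w.2) * w.2 by rewrite -mulrDr -expr2 sqr_ge0.
have refl_w : 0 <= (u.1 + w.1) * u.1 -> 0 <= (u.2 + w.2) * u.2 -> False.
  move=> ux uy; apply: (not_in_bicone_oppw c_neq0); apply: bicone_at.
  by split; [apply: (reflect_x gP3.1 gP1.1) | apply: (reflect_y gP3.2 gP1.2)];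
     rewrite // addrC.
have refl_u : 0 <= (u.1 + w.1) * w.1 -> 0 <= (u.2 + w.2) * w.2 -> False.
  move=> wx wy; apply: (not_in_bicone_oppu c_neq0); apply: bicone_at.
  by split; [apply: (reflect_x gP1.1 gP3.1) | apply: (reflect_y gP1.2 gP3.2)].
have [ux|ux] := leP 0 ((u.1 + w.1) * u.1).
  have [uy|uy] := leP 0 ((u.2 + w.2) * u.2); first exact: refl_w.
  have [wx|wx] := leP 0 ((u.1 + w.1) * w.1); first by apply: refl_u; lra.
  apply: (not_in_bicone_oppw1 uw1 uw2); [lra | lra | apply: bicone_at].
  by rewrite sy; split; [apply: (reflect_x gP3.1 gP1.1); rewrite // addrC | exact: gP1.2].
have [wy|wy] := leP 0 ((u.2 + w.2) * w.2); first by apply: refl_u; lra.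
have uy : 0 <= (u.2 + w.2) * u.2 by lra.
apply: (not_in_bicone_oppw2 uw1 uw2); [lra | lra | apply: bicone_at].
by rewrite sx; split; [exact: gP1.1 | apply: (reflect_y gP3.2 gP1.2); rewrite // addrC].
Qed.

(* A negative combination of [u] and [w] makes [P1], [P3], [Q] surround [P2] in each
   coordinate, so the four axis neighbours of [P2] are grid points. *)
Lemma grid_no_neg_cone (Q : pt) : grid Q -> ~ in_neg_cone u w (vsub Q P2).
Proof.
move=> gQ negQ.
have cx : cross (- u.1, u.2) (- w.1, w.2) != 0 by rewrite cross_oppx oppr_eq0.
have cy : cross (u.2, u.1) (w.2, w.1) != 0 by rewrite cross_swap oppr_eq0.
have cxy : cross (- u.2, u.1) (- w.2, w.1) != 0.
  by rewrite (cross_oppx (u.2, u.1) (w.2, w.1)) oppr_eq0.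
have left : on_grid a dx N (P2.1 - dx).
  case: (in_neg_cone_x c_neq0 negQ); rewrite /= !subr_lt0 => lt;
    by [apply: on_grid_predl gP2.1 gP1.1 lt | apply: on_grid_predl gP2.1 gP3.1 lt
       | apply: on_grid_predl gP2.1 gQ.1 lt].
have right : on_grid a dx N (P2.1 + dx).
  case: (in_neg_cone_x cx (in_neg_cone_oppx negQ)); rewrite /= !oppr_lt0 !subr_gt0 => lt;
    by [apply: on_grid_succr gP2.1 gP1.1 lt | apply: on_grid_succr gP2.1 gP3.1 lt
       | apply: on_grid_succr gP2.1 gQ.1 lt].
have down : on_grid b dy M (P2.2 - dy).
  case: (in_neg_cone_x cy (in_neg_cone_swap negQ)); rewrite /= !subr_lt0 => lt;
    by [apply: on_grid_predl gP2.2 gP1.2 lt | apply: on_grid_predl gP2.2 gP3.2 lt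
       | apply: on_grid_predl gP2.2 gQ.2 lt].
have up : on_grid b dy M (P2.2 + dy).
  case: (in_neg_cone_x cxy (in_neg_cone_oppx (in_neg_cone_swap negQ)));
    rewrite /= !oppr_lt0 !subr_gt0 => lt;
    by [apply: on_grid_succr gP2.2 gP1.2 lt | apply: on_grid_succr gP2.2 gP3.2 lt
       | apply: on_grid_succr gP2.2 gQ.2 lt].
have [gx2 gy2] := gP2.
apply: grid_opposite_quadrants.
- by apply: (in_bicone_opp_y dy_gt0 c_neq0); apply: bicone_at; rewrite /= addr0; split.
- by apply: (in_bicone_opp_x dx_gt0 c_neq0); apply: bicone_at; rewrite /= addr0; split.
Qed.

End GridBicone.

Section Lines.
Variable R : realType.
Local Notation pt := (R * R)%type.

Definition fline (P x : pt) : R := P.1 * x.1 + P.2 * x.2 - 1.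

Lemma linePE (P x : pt) : lineP P x <-> fline P x = 0.
Proof. by rewrite /lineP /fline /=; split=> [->|/eqP]; rewrite ?subrr // subr_eq0 => /eqP. Qed.

Lemma fline_originl (x : pt) : fline (origin R) x = -1.
Proof. by rewrite /fline /=; ring. Qed.

Lemma fline_originr (P : pt) : fline P (origin R) = -1.
Proof. by rewrite /fline /=; ring. Qed.

(* [G - P2 = alpha (P1 - P2) + beta (P3 - P2)] by Cramer's rule, and [fline] is affine in
   its first argument. *)
Lemma fline_decomp (P1 P2 P3 G x : pt) :
  cross (vsub P1 P2) (vsub P3 P2) * fline G x =
    cross (vsub P1 P2) (vsub P3 P2) * fline P2 x
    + cross (vsub G P2) (vsub P3 P2) * (fline P1 x - fline P2 x)
    + cross (vsub P1 P2) (vsub G P2) * (fline P3 x - fline P2 x).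
Proof.
by case: P1 P2 P3 G x => [? ?] [? ?] [? ?] [? ?] [? ?]; rewrite /fline /cross /vsub /=; ring.
Qed.

Lemma cross_fline_neq0 (P1 P2 P3 x y : pt) :
  fline P1 x = fline P2 x -> fline P3 x != fline P2 x -> fline P1 y != fline P2 y ->
  cross (vsub P1 P2) (vsub P3 P2) != 0.
Proof.
case: P1 P2 P3 x y => [p1 p2] [q1 q2] [r1 r2] [x1 x2] [y1 y2].
rewrite /fline /cross /vsub /= => ex nx ny; apply/eqP => c0.
set d1 := p1 - q1 in c0 *; set d2 := p2 - q2 in c0 *.
have dx : d1 * x1 + d2 * x2 = 0 by rewrite /d1 /d2; lra.
have e1 : ((r1 - q1) * x1 + (r2 - q2) * x2) * d1 = 0.
  have -> : ((r1 - q1) * x1 + (r2 - q2) * x2) * d1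
    = (d1 * x1 + d2 * x2) * (r1 - q1) + (d1 * (r2 - q2) - d2 * (r1 - q1)) * x2 by ring.
  by rewrite dx c0; ring.
have e2 : ((r1 - q1) * x1 + (r2 - q2) * x2) * d2 = 0.
  have -> : ((r1 - q1) * x1 + (r2 - q2) * x2) * d2
    = (d1 * x1 + d2 * x2) * (r2 - q2) - (d1 * (r2 - q2) - d2 * (r1 - q1)) * x1 by ring.
  by rewrite dx c0; ring.
have rx : (r1 - q1) * x1 + (r2 - q2) * x2 != 0.
  by apply: contraNneq nx => h; apply/eqP; lra.
move/eqP: e1; rewrite mulf_eq0 (negbTE rx) /= => /eqP d1_0.
move/eqP: e2; rewrite mulf_eq0 (negbTE rx) /= => /eqP d2_0.
have dy : d1 * y1 + d2 * y2 = 0 by rewrite d1_0 d2_0; ring.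
by rewrite /d1 /d2 in dy; move/eqP: ny; apply; lra.
Qed.

Lemma eq_of_common_zeros (P P' x y : pt) :
  fline P x = 0 -> fline P y = 0 -> fline P' x = 0 -> fline P' y = 0 -> x <> y -> P = P'.
Proof.
case: P P' x y => [p1 p2] [q1 q2] [x1 x2] [y1 y2]; rewrite /fline /= => h1 h2 h3 h4 xy.
have cr : x1 * y2 - x2 * y1 != 0.
  apply/negP => /eqP c0; apply: xy.
  have e1 : y1 - x1 = - p2 * (x1 * y2 - x2 * y1).
    rewrite (_ : y1 - x1 = (p1 * x1 + p2 * x2) * y1 - (p1 * y1 + p2 * y2) * x1
      - (p1 * x1 + p2 * x2 - 1) * y1 + (p1 * y1 + p2 * y2 - 1) * x1); last by ring.
    by rewrite h1 h2; ring.
  have e2 : y2 - x2 = p1 * (x1 * y2 - x2 * y1).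
    rewrite (_ : y2 - x2 = (p1 * x1 + p2 * x2) * y2 - (p1 * y1 + p2 * y2) * x2
      - (p1 * x1 + p2 * x2 - 1) * y2 + (p1 * y1 + p2 * y2 - 1) * x2); last by ring.
    by rewrite h1 h2; ring.
  rewrite c0 mulr0 in e1 e2.
  have -> : y1 = x1 by lra.
  by have -> : y2 = x2 by lra.
have E1 : (p1 - q1) * (x1 * y2 - x2 * y1) = 0.
  rewrite (_ : _ * _ = (p1 * x1 + p2 * x2 - 1 - (q1 * x1 + q2 * x2 - 1)) * y2
     - (p1 * y1 + p2 * y2 - 1 - (q1 * y1 + q2 * y2 - 1)) * x2); last by ring.
  by rewrite h1 h2 h3 h4; ring.
have E2 : (p2 - q2) * (x1 * y2 - x2 * y1) = 0.
  rewrite (_ : _ * _ = (p1 * y1 + p2 * y2 - 1 - (q1 * y1 + q2 * y2 - 1)) * x1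
     - (p1 * x1 + p2 * x2 - 1 - (q1 * x1 + q2 * x2 - 1)) * y1); last by ring.
  by rewrite h1 h2 h3 h4; ring.
move/eqP: E1; rewrite mulf_eq0 (negbTE cr) orbF subr_eq0 => /eqP ->.
move/eqP: E2; rewrite mulf_eq0 (negbTE cr) orbF subr_eq0 => /eqP ->.
by [].
Qed.

Lemma line_eq_lineP (al be c : R) (Q y z : pt) :
  (al, be) <> origin R -> al * y.1 + be * y.2 = c -> al * z.1 + be * z.2 = c ->
  fline Q y = 0 -> fline Q z = 0 -> y <> z ->
  [set p : R * R | al * p.1 + be * p.2 = c] = lineP Q.
Proof.
case: Q y z => [Q1 Q2] [y1 y2] [z1 z2]; rewrite /fline /origin /= => hab hy hz fy fz yz.
set k := al * Q2 - be * Q1.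
have k1 : k * (z1 - y1) = 0.
  rewrite (_ : k * _ = Q2 * ((al * z1 + be * z2) - (al * y1 + be * y2))
     - be * ((Q1 * z1 + Q2 * z2 - 1) - (Q1 * y1 + Q2 * y2 - 1))); last by rewrite /k; ring.
  by rewrite hy hz fy fz; ring.
have k2 : k * (z2 - y2) = 0.
  rewrite (_ : k * _ = - Q1 * ((al * z1 + be * z2) - (al * y1 + be * y2))
     + al * ((Q1 * z1 + Q2 * z2 - 1) - (Q1 * y1 + Q2 * y2 - 1))); last by rewrite /k; ring.
  by rewrite hy hz fy fz; ring.
have k0 : k = 0.
  case: (eqVneq z1 y1) => [e1|n1]; last first.
    by move/eqP: k1; rewrite mulf_eq0 (subr_eq0 z1 y1) (negbTE n1) orbF => /eqP.
  case: (eqVneq z2 y2) => [e2|n2]; last first.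
    by move/eqP: k2; rewrite mulf_eq0 (subr_eq0 z2 y2) (negbTE n2) orbF => /eqP.
  by exfalso; apply: yz; rewrite e1 e2.
have ea : al = c * Q1.
  have e : c * Q1 - al = - k * y2 + al * (Q1 * y1 + Q2 * y2 - 1) by rewrite -hy /k; ring.
  move: e; rewrite fy k0 oppr0 !mul0r mulr0 addr0 => /eqP; rewrite subr_eq0 => /eqP.
  by move=> ->.
have eb : be = c * Q2.
  have e : c * Q2 - be = k * y1 + be * (Q1 * y1 + Q2 * y2 - 1) by rewrite -hy /k; ring.
  move: e; rewrite fy k0 !mul0r mulr0 addr0 => /eqP; rewrite subr_eq0 => /eqP.
  by move=> ->.
have c0 : c != 0.
  apply/negP => /eqP c0; apply: hab; by rewrite ea eb c0 !mul0r.
rewrite /lineP; apply/seteqP; split => p /=; rewrite ea eb.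
- move=> h; apply: (mulfI c0); rewrite mulr1 -[RHS]h; ring.
- by move=> h; rewrite -mulrA -mulrA -mulrDr h mulr1.
Qed.

(* Both sides are affine in [q], vanish on [L_P] and agree at the origin. *)
Lemma cross_fline (P w0 w1 q : pt) : fline P w0 = 0 -> fline P w1 = 0 ->
  cross (vsub w1 w0) (vsub q w0) = - cross (vsub w1 w0) (vsub (origin R) w0) * fline P q.
Proof.
case: P w0 w1 q => [p1 p2] [a1 a2] [b1 b2] [q1 q2]; rewrite /fline /cross /vsub /= => f0 f1.
apply/eqP; rewrite -subr_eq0; apply/eqP.
have -> : (b1 - a1) * (q2 - a2) - (b2 - a2) * (q1 - a1)
    - - ((b1 - a1) * (0 - a2) - (b2 - a2) * (0 - a1)) * (p1 * q1 + p2 * q2 - 1)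
  = q1 * (b2 * (p1 * a1 + p2 * a2 - 1) - a2 * (p1 * b1 + p2 * b2 - 1))
    + q2 * (a1 * (p1 * b1 + p2 * b2 - 1) - b1 * (p1 * a1 + p2 * a2 - 1)) by ring.
by rewrite f0 f1; ring.
Qed.

Definition lr_sign (d : lr) : R := if d is Right then -1 else 1.

Lemma lr_sign_sqr (d : lr) : lr_sign d * lr_sign d = 1.
Proof. by case: d => /=; ring. Qed.

Lemma side_of_O_fline_ge0 (D : set pt) n (v : 'I_n -> pt) (k : 'I_n) (P : pt) :
  fline P (v k) = 0 -> fline P (v (ordS k)) = 0 -> v k <> v (ordS k) ->
  (forall q, D q -> cross (vsub (v (ordS k)) (v k)) (vsub q (v k)) <= 0) ->
  forall q, D q -> 0 <= lr_sign (side_of_O v k) * fline P q.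
Proof.
move=> f0 f1 v_neq cw q Dq; have := cw q Dq.
rewrite (cross_fline _ f0 f1) /side_of_O; set c := cross _ (vsub (origin R) _).
have c_neq0 : c != 0.
  apply/eqP => c0; apply: v_neq.
  move: (cross_fline ((v k).1 + 1, (v k).2) f0 f1) (cross_fline ((v k).1, (v k).2 + 1) f0 f1).
  rewrite -/c c0 oppr0 !mul0r.
  case: (v k) (v (ordS k)) => [a1 a2] [b1 b2]; rewrite /cross /vsub /= => e1 e2.
  by congr pair; lra.
have [c_lt0|c_ge0] := ltP c 0 => /=; rewrite mulNr oppr_le0.
  by rewrite (nmulr_rge0 _ c_lt0) mulN1r oppr_ge0.
have c_gt0 : 0 < c by rewrite lt_neqAle eq_sym c_neq0.
by rewrite (pmulr_rge0 _ c_gt0) mul1r.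
Qed.

End Lines.

Arguments lr_sign {R}.

Section ThreeLines.
Variable R : realType.
Local Notation pt := (R * R)%type.
Variables P1 P2 P3 w0 w1 w2 w3 : pt.
Hypotheses (e10 : fline P1 w0 = 0) (e11 : fline P1 w1 = 0) (e21 : fline P2 w1 = 0)
  (e22 : fline P2 w2 = 0) (e32 : fline P3 w2 = 0) (e33 : fline P3 w3 = 0).
Hypotheses (k31 : 0 < fline P3 w1 * fline P1 w2) (k20 : 0 < fline P2 w0 * fline P1 w2)
  (k23 : 0 < fline P3 w1 * fline P2 w3).
Local Notation u := (vsub P1 P2).
Local Notation w := (vsub P3 P2).
Local Notation c := (cross u w).

Let f31_neq0 : fline P3 w1 != 0.
Proof. by apply: contraTneq k31 => ->; rewrite mul0r ltxx. Qed.

Let f12_neq0 : fline P1 w2 != 0.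
Proof. by apply: contraTneq k31 => ->; rewrite mulr0 ltxx. Qed.

Let f20_neq0 : fline P2 w0 != 0.
Proof. by apply: contraTneq k20 => ->; rewrite mul0r ltxx. Qed.

Lemma three_lines_cross_neq0 : c != 0.
Proof. by apply: (cross_fline_neq0 (x := w1) (y := w2)); rewrite ?e11 ?e21 ?e22. Qed.
Let c_neq0 := three_lines_cross_neq0.

Let cc_gt0 : 0 < c * c.
Proof. by rewrite lt0r mulf_neq0 //= -expr2 sqr_ge0. Qed.

Section Coordinates.
Variable G : pt.
Local Notation A := (cross (vsub G P2) w).
Local Notation B := (cross u (vsub G P2)).

Let cG1 : c * fline G w1 = B * fline P3 w1.
Proof. by rewrite fline_decomp e11 e21; ring. Qed.

Let cG2 : c * fline G w2 = A * fline P1 w2.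
Proof. by rewrite fline_decomp e22 e32; ring. Qed.

Let cG0 : B = 0 -> c * fline G w0 = (c - A) * fline P2 w0.
Proof. by move=> B0; rewrite fline_decomp e10 B0; ring. Qed.

Let cG3 : A = 0 -> c * fline G w3 = (c - B) * fline P2 w3.
Proof. by move=> A0; rewrite fline_decomp e33 A0; ring. Qed.

Lemma in_bicone_of_fline_signs :
  0 <= fline G w1 * fline G w2 -> 0 <= fline G w0 * fline G w2 ->
  0 <= fline G w1 * fline G w3 -> in_bicone u w (vsub G P2).
Proof.
move=> G12 G02 G13; split.
- have E : c * c * (fline G w1 * fline G w2) = A * B * (fline P3 w1 * fline P1 w2).
    by rewrite mulrACA cG1 cG2; ring.
  by have := mulr_ge0 (ltW cc_gt0) G12; rewrite E (pmulr_lge0 _ k31).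
- move=> B0; have E : c * c * (fline G w0 * fline G w2)
      = (c - A) * A * (fline P2 w0 * fline P1 w2) by rewrite mulrACA (cG0 B0) cG2; ring.
  have := mulr_ge0 (ltW cc_gt0) G02; rewrite E (pmulr_lge0 _ k20) => cAA.
  by have := sqr_ge0 A; rewrite expr2; nra.
- move=> A0; have E : c * c * (fline G w1 * fline G w3)
      = (c - B) * B * (fline P3 w1 * fline P2 w3) by rewrite mulrACA cG1 (cG3 A0); ring.
  have := mulr_ge0 (ltW cc_gt0) G13; rewrite E (pmulr_lge0 _ k23) => cBB.
  by have := sqr_ge0 B; rewrite expr2; nra.
Qed.

Let sqr_gt0 (x : R) : x != 0 -> 0 < x * x.
Proof. by move=> x0; rewrite lt0r mulf_neq0 //= -expr2 sqr_ge0. Qed.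

Lemma in_neg_cone_of_fline_signs :
  fline G w0 * fline P2 w0 <= 0 -> fline G w1 * fline P3 w1 <= 0 ->
  fline G w2 * fline P1 w2 <= 0 -> in_bicone u w (vsub G P2) -> in_neg_cone u w (vsub G P2).
Proof.
move=> G0 G1 G2 [_ B0_Ac A0_Bc].
have A0B0 : A = 0 -> B = 0 -> False.
  move=> A0 B0; have E : c * c * (fline G w0 * fline P2 w0) = c * fline P2 w0 * (c * fline P2 w0).
    by rewrite mulrACA (cG0 B0) A0; ring.
  have := mulr_ge0_le0 (ltW cc_gt0) G0.
  by rewrite E leNgt sqr_gt0 // mulf_neq0.
have Bc_le0 : B * c <= 0.
  have E : c * c * (fline G w1 * fline P3 w1) = B * c * (fline P3 w1 * fline P3 w1).
    by rewrite mulrACA cG1; ring.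
  by have := mulr_ge0_le0 (ltW cc_gt0) G1; rewrite E (pmulr_lle0 _ (sqr_gt0 f31_neq0)).
have Ac_le0 : A * c <= 0.
  have E : c * c * (fline G w2 * fline P1 w2) = A * c * (fline P1 w2 * fline P1 w2).
    by rewrite mulrACA cG2; ring.
  by have := mulr_ge0_le0 (ltW cc_gt0) G2; rewrite E (pmulr_lle0 _ (sqr_gt0 f12_neq0)).
have eq0 (x : R) : x * c = 0 -> x = 0 by move/eqP; rewrite mulf_eq0 (negbTE c_neq0) orbF => /eqP.
split; rewrite lt_neqAle ?Ac_le0 ?Bc_le0 andbT; apply/eqP => /eq0 x0.
- by apply: A0B0 => //; apply: eq0; apply/eqP; rewrite eq_le Bc_le0 A0_Bc.
- by apply: A0B0 => //; apply: eq0; apply/eqP; rewrite eq_le Ac_le0 B0_Ac.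
Qed.

End Coordinates.

End ThreeLines.

Section GridLines.
Variables (R : realType) (a b dx dy : R) (N M : nat).
Hypotheses (dx_gt0 : 0 < dx) (dy_gt0 : 0 < dy).
Local Notation pt := (R * R)%type.
Local Notation grid G := (on_grid a dx N G.1 /\ on_grid b dy M G.2).

Lemma grid_three_lines_contra (P1 P2 P3 Q w0 w1 w2 w3 : pt) :
  grid P1 -> grid P2 -> grid P3 -> grid Q ->
  fline P1 w0 = 0 -> fline P1 w1 = 0 -> fline P2 w1 = 0 -> fline P2 w2 = 0 ->
  fline P3 w2 = 0 -> fline P3 w3 = 0 ->
  0 < fline P3 w1 * fline P1 w2 -> 0 < fline P2 w0 * fline P1 w2 ->
  0 < fline P3 w1 * fline P2 w3 ->
  (forall G, grid G -> [/\ 0 <= fline G w1 * fline G w2, 0 <= fline G w0 * fline G w2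
                        & 0 <= fline G w1 * fline G w3]) ->
  fline Q w0 * fline P2 w0 <= 0 -> fline Q w1 * fline P3 w1 <= 0 ->
  fline Q w2 * fline P1 w2 <= 0 -> False.
Proof.
move=> gP1 gP2 gP3 gQ e10 e11 e21 e22 e32 e33 k31 k20 k23 signs Q0 Q1 Q2.
have c_neq0 := three_lines_cross_neq0 e11 e21 e22 k31.
have bicone G : grid G -> in_bicone (vsub P1 P2) (vsub P3 P2) (vsub G P2).
  by case/signs; apply: in_bicone_of_fline_signs.
apply: (grid_no_neg_cone dx_gt0 dy_gt0 gP1 gP2 gP3 c_neq0 bicone gQ).
exact: (in_neg_cone_of_fline_signs e10 e11 e21 e22 e32 k31 k20 Q0 Q1 Q2 (bicone _ gQ)).
Qed.

End GridLines.

Section Topology.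
Variable R : realType.
Local Notation pt := (R * R)%type.

Lemma fline_continuous (P : pt) : continuous (fline P).
Proof.
move=> p; apply: cvgB; last exact: cvg_cst.
by apply: cvgD; apply: cvgM; by [exact: cvg_cst | exact: cvg_fst | exact: cvg_snd].
Qed.

Lemma connected_nonzero_pos (A : set pt) (g : pt -> R) (x y : pt) :
  connected A -> continuous g -> (forall z, A z -> g z != 0) -> A x -> A y ->
  0 < g x -> 0 < g y.
Proof.
move=> cA cg nz Ax Ay gx; rewrite ltNge; apply/negP => gy.
have /connected_intervalP gA : connected (g @` A).
  by apply: connected_continuous_connected => // z; apply: continuous_subspaceT.
have [z Az gz0] : (g @` A) 0 by apply: (gA (g y) (g x)); [exists y | exists x | rewrite gy ltW].
by move: (nz z Az); rewrite gz0 eqxx.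
Qed.

Lemma segment_connected_component (A : set pt) (x y : pt) :
  segment x y `<=` A -> connected_component A x y.
Proof.
move=> xyA; pose gam (t : R) := (x.1 + t * (y.1 - x.1), x.2 + t * (y.2 - x.2)).
have segE : segment x y = gam @` `[0, 1].
  apply/seteqP; split=> p.
    by case=> t [t0 t1 ->]; exists t => //; rewrite /= in_itv /= t0 t1.
  by case=> t; rewrite /= in_itv /= => /andP[t0 t1] <-; exists t.
exists (segment x y); last first.
  exists 1; split; rewrite ?ler01 //.
  by case: x y {xyA gam segE} => ? ? [? ?] /=; congr pair; ring.
split=> //.
  exists 0; split; rewrite ?lexx ?ler01 //.
  by case: x {xyA gam segE} => ? ? /=; congr pair; ring.
rewrite segE; apply: connected_continuous_connected; first exact: segment_connected.
apply: continuous_subspaceT => t.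
have affine_cvg (p v : R) : (fun s : R => p + s * v) @ t --> p + t * v.
  by apply: cvgD; [exact: cvg_cst | apply: cvgMr_tmp; exact: cvg_id].
exact: (cvg_pair (affine_cvg _ _) (affine_cvg _ _)).
Qed.

Lemma closure_ge0 (A : set pt) (g : pt -> R) :
  continuous g -> (forall z, A z -> 0 <= g z) -> forall z, closure A z -> 0 <= g z.
Proof.
move=> cg Ag z; have cl : closed (g @^-1` [set r | 0 <= r]).
  by apply: preimage_closed; [move=> p _; exact: cg | exact: closed_ge].
by move/(closureS Ag); rewrite -(closure_id _).1.
Qed.

Lemma finite_common_bound (T : finType) (F : T -> R -> Prop) :
  (forall i, exists2 e : R, 0 < e & forall t, 0 < t -> t <= e -> F i t) ->
  exists2 e : R, 0 < e & forall i t, 0 < t -> t <= e -> F i t.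
Proof.
move=> Fe; suff [e e_gt0 Fs] : exists2 e : R, 0 < e &
    forall i, i \in enum T -> forall t, 0 < t -> t <= e -> F i t.
  by exists e => // i; apply: Fs; rewrite mem_enum.
elim: (enum T) => [|i s [e e_gt0 Fs]]; first by exists 1.
have [e' e'_gt0 Fi] := Fe i.
exists (Order.min e e'); first by rewrite lt_min e_gt0 e'_gt0.
move=> j; rewrite inE => /orP[/eqP ->|js] t t_gt0; rewrite le_min => /andP[te te'].
- exact: Fi.
- exact: Fs.
Qed.

Lemma affine_pos_near0 (al be : R) : 0 < al ->
  exists2 e : R, 0 < e & forall t, 0 < t -> t <= e -> 0 < al + t * be.
Proof.
move=> al_gt0; have b1_gt0 : 0 < `|be| + 1 by rewrite ltr_wpDl.
exists (al / (`|be| + 1)); first by rewrite divr_gt0.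
move=> t t_gt0; rewrite ler_pdivlMr // => t_le.
have : - `|be| <= be by have := ler_norm (- be); rewrite normrN; lra.
nra.
Qed.

End Topology.

Section Region.
Variables (R : realType) (S : set (R * R)) (x0 : R * R).
Hypothesis x0S : arr_complement S x0.
Local Notation pt := (R * R)%type.
Local Notation C := (closure (connected_component (arr_complement S) x0)).

Lemma arr_complementP (z : pt) : arr_complement S z <-> forall P, S P -> fline P z != 0.
Proof.
split=> [zS P SP|nz [P SP]]; last by move/linePE/eqP; apply/negP; exact: nz.
by apply/eqP => /linePE Pz; apply: zS; exists P.
Qed.

Lemma region_fline_sign (Q q : pt) : S Q -> C q -> 0 <= fline Q x0 * fline Q q.
Proof.
move=> SQ; apply: (closure_ge0 (g := fun y => fline Q x0 * fline Q y)) => [p|z xz].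
  by apply: cvgMl_tmp; exact: fline_continuous.
have nz y : arr_complement S y -> fline Q y != 0 by move/arr_complementP; apply.
apply/ltW/(connected_nonzero_pos (A := connected_component (arr_complement S) x0)
  (g := fun y => fline Q x0 * fline Q y) (x := x0)) => //.
- exact: component_connected.
- by move=> p; apply: cvgMl_tmp; exact: fline_continuous.
- by move=> y xy; rewrite mulf_neq0 ?nz //; apply: connected_component_sub xy.
- exact: connected_component_refl.
- by rewrite lt0r mulf_neq0 ?nz //= -expr2 sqr_ge0.
Qed.

Lemma region_fline_sign2 (Q q q' : pt) : S Q -> C q -> C q' -> 0 <= fline Q q * fline Q q'.
Proof.
move=> SQ Cq Cq'; have x0Q : fline Q x0 != 0 by move/arr_complementP: x0S; apply.
have : 0 <= (fline Q x0 * fline Q q) * (fline Q x0 * fline Q q').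
  by apply: mulr_ge0; apply: region_fline_sign.
by rewrite mulrACA pmulr_rge0 // lt0r mulf_neq0 //= -expr2 sqr_ge0.
Qed.

Lemma region_of_fline_signs (q : pt) : (forall Q, S Q -> 0 < fline Q x0 * fline Q q) -> C q.
Proof.
move=> Sq; apply/subset_closure/segment_connected_component => _ [t [t0 t1 ->]].
apply/arr_complementP => P SP; have x0P : fline P x0 != 0 by move/arr_complementP: x0S; apply.
have -> : fline P (x0.1 + t * (q.1 - x0.1), x0.2 + t * (q.2 - x0.2))
    = (1 - t) * fline P x0 + t * fline P q by rewrite /fline /=; ring.
apply: contraTneq (Sq P SP) => e; rewrite -leNgt.
have xx : 0 < fline P x0 * fline P x0 by rewrite lt0r mulf_neq0 //= -expr2 sqr_ge0.
have : (1 - t) * (fline P x0 * fline P x0) + t * (fline P x0 * fline P q) = 0.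
  by rewrite -[RHS](mulr0 (fline P x0)) -e; ring.
set X := fline P x0 * fline P x0 in xx *; set Y := fline P x0 * fline P q => sum0.
have X_ge0 : 0 <= (1 - t) * X by apply: mulr_ge0; [lra | exact: ltW].
have [t_gt0|t_le0] := ltP 0 t; first by rewrite -(pmulr_rle0 _ t_gt0) mulrC; lra.
have t_eq0 : t = 0 by lra.
by rewrite t_eq0 in sum0; lra.
Qed.

Lemma region_origin : (forall Q, S Q -> fline Q x0 < 0) -> C (origin R).
Proof.
move=> neg; apply: region_of_fline_signs => Q SQ.
by rewrite fline_originr mulrN1 oppr_gt0; exact: neg.
Qed.

Lemma region_unbounded : x0 <> origin R -> (forall Q, S Q -> 0 < fline Q x0) -> ~ bounded_pt C.
Proof.
move=> x0_neq0 pos [B Bb].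
have ray t : 1 <= t -> C (t * x0.1, t * x0.2).
  move=> t_ge1; apply: region_of_fline_signs => Q SQ; have Q_gt0 := pos Q SQ.
  have -> : fline Q (t * x0.1, t * x0.2) = fline Q x0 + (t - 1) * (fline Q x0 + 1).
    by rewrite /fline /=; ring.
  have : 0 <= (t - 1) * (fline Q x0 + 1) by apply: mulr_ge0; lra.
  by move=> ?; apply: mulr_gt0 => //; lra.
have m_gt0 : 0 < `|x0.1| + `|x0.2|.
  rewrite lt_neqAle addr_ge0 // andbT eq_sym paddr_eq0 // !normr_eq0.
  apply: contra_notN x0_neq0 => /andP[/eqP e1 /eqP e2].
  by rewrite [x0]surjective_pairing e1 e2.
pose t := (2 * `|B| + 1) / (`|x0.1| + `|x0.2|) + 1.
have t_ge1 : 1 <= t by rewrite lerDr divr_ge0 // addr_ge0 // mulr_ge0.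
have tm : t * `|x0.1| + t * `|x0.2| = 2 * `|B| + 1 + (`|x0.1| + `|x0.2|).
  by rewrite -mulrDr mulrDl divfK ?gt_eqF // mul1r.
have [] := Bb _ (ray t t_ge1); rewrite /= !normrM ger0_norm ?(le_trans ler01 t_ge1) //.
by have := ler_norm B; lra.
Qed.

Lemma region_separating_line (d : lr) : bounded_pt C -> ~ C (origin R) ->
  exists2 Q, S Q & lr_sign d * fline Q x0 < 0.
Proof.
move=> Cbd CO; apply: contrapT => none.
have pos Q : S Q -> 0 < lr_sign d * fline Q x0.
  move=> SQ; rewrite lt_neqAle eq_sym mulf_neq0 /=; last by move/arr_complementP: x0S; apply.
    by rewrite leNgt; apply/negP => neg; apply: none; exists Q.
  by case: d {none} => /=; rewrite ?oppr_eq0 oner_eq0.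
case: d {none} pos => /= pos.
- apply: (region_unbounded _ _ Cbd) => [x0O|Q /pos]; last by rewrite mul1r.
  by apply: CO; rewrite -x0O; apply/subset_closure/connected_component_refl.
- by apply: CO; apply: region_origin => Q /pos; rewrite mulN1r oppr_gt0.
Qed.

Section FiniteArrangement.
Variables (T : finType) (g : T -> pt).
Hypothesis S_fin : S `<=` range g.

Lemma region_side_point_on_line (Lc : set pt) (z : pt) :
  side_line C Lc -> C z -> Lc z -> exists2 P, S P & fline P z = 0.
Proof.
move=> [al [be [c [ab_neq0 -> below _]]]] Cz /= Lz; apply: contrapT => none.
have pos P : S P -> 0 < fline P x0 * fline P z.
  move=> SP; rewrite lt0r region_fline_sign // andbT mulf_neq0 //.
    by move/arr_complementP: x0S; apply.
  by apply/eqP => Pz; apply: none; exists P.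
(* Otherwise a small step from [z] along the outer normal [(al, be)] stays in [C]. *)
pose zt (t : R) := (z.1 + t * al, z.2 + t * be).
have [e e_gt0 Fe] : exists2 e : R, 0 < e &
    forall i t, 0 < t -> t <= e -> S (g i) -> 0 < fline (g i) x0 * fline (g i) (zt t).
  apply: finite_common_bound => i; have [Si|nSi] := pselect (S (g i)); last by exists 1.
  have [e e_gt0 near] := affine_pos_near0
    (fline (g i) x0 * ((g i).1 * al + (g i).2 * be)) (pos _ Si).
  exists e => // t t_gt0 te _; have := near t t_gt0 te.
  by congr (0 < _); rewrite /zt /fline /=; ring.
have Czt : C (zt e).
  apply: region_of_fline_signs => Q SQ; have [i _ gi] := S_fin SQ.
  by rewrite -gi in SQ *; exact: (Fe i e e_gt0 (lexx e) SQ).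
have := below _ Czt; rewrite /zt /=.
have ab_gt0 : 0 < al * al + be * be.
  rewrite lt_neqAle addr_ge0 ?andbT -?expr2 ?sqr_ge0 // eq_sym paddr_eq0 ?sqr_ge0 //.
  by rewrite !sqrf_eq0; apply: contra_notN ab_neq0 => /andP[/eqP -> /eqP ->].
nra.
Qed.

Lemma region_side_lineP (Lc : set pt) (p q : pt) :
  side_line C Lc -> p <> q -> segment p q `<=` C `&` Lc -> exists2 P, S P & Lc = lineP P.
Proof.
(* Pigeonhole: [#|T|.+1] distinct points of the side each lie on a line of the
   arrangement. *)
move=> side pq seg; set K := #|T|.
pose tm (m : 'I_K.+1) : R := m%:R / K.+1%:R.
pose pt_at m := (p.1 + tm m * (q.1 - p.1), p.2 + tm m * (q.2 - p.2)).
have on_seg m : segment p q (pt_at m).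
  exists (tm m); split=> //; first by rewrite divr_ge0.
  by rewrite ler_pdivrMr ?ltr0Sn // mul1r ler_nat ltnW.
have on_line m : exists i, S (g i) /\ fline (g i) (pt_at m) = 0.
  have [Cm Lm] := seg _ (on_seg m).
  have [P SP Pm] := region_side_point_on_line side Cm Lm.
  by have [i _ gi] := S_fin SP; exists i; rewrite gi.
have [phi phiP] := choice on_line.
have /injectivePn [m1 [m2 m12 phi12]] : ~~ injectiveb phi.
  by apply/injectiveP => /leq_card; rewrite card_ord ltnn.
have [SP1 f1] := phiP m1; have [_ f2] := phiP m2; rewrite -phi12 in f2.
have tm_inj : injective tm.
  move=> m m' /(congr1 ( *%R^~ K.+1%:R)); rewrite !divfK ?pnatr_eq0 //.
  by move/eqP; rewrite eqr_nat => /eqP; exact: val_inj.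
have pts_neq : pt_at m1 <> pt_at m2.
  move=> [e1 e2]; move/negP: m12; apply; apply/eqP/tm_inj/eqP; rewrite -subr_eq0.
  apply: contra_notT pq => t_neq.
  have d1 : (tm m1 - tm m2) * (q.1 - p.1) = 0 by rewrite mulrBl; lra.
  have d2 : (tm m1 - tm m2) * (q.2 - p.2) = 0 by rewrite mulrBl; lra.
  move/eqP: d1 d2; rewrite mulf_eq0 (negbTE t_neq) subr_eq0 => /eqP e1' /eqP.
  rewrite mulf_eq0 (negbTE t_neq) subr_eq0 => /eqP e2'.
  by rewrite [q]surjective_pairing e1' e2' -surjective_pairing.
case: side => al [be [c [ab_neq0 Lc_eq _ _]]].
exists (g (phi m1)) => //; rewrite Lc_eq; apply: (line_eq_lineP ab_neq0 _ _ f1 f2 pts_neq).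
- by have [_] := seg _ (on_seg m1); rewrite Lc_eq.
- by have [_] := seg _ (on_seg m2); rewrite Lc_eq.
Qed.

End FiniteArrangement.

End Region.

Section ClockwiseRegion.
Variables (R : realType) (S : set (R * R)) (T : finType) (g : T -> R * R) (x0 : R * R).
Hypotheses (S_fin : S `<=` range g) (x0S : arr_complement S x0).
Local Notation pt := (R * R)%type.
Local Notation C := (closure (connected_component (arr_complement S) x0)).
Variables (n : nat) (L : 'I_n -> set pt) (v : 'I_n -> pt).
Hypothesis sides : clockwise_sides C L v.

Let on_side k (t : R) : 0 <= t <= 1 ->
  (C `&` L k) ((v k).1 + t * ((v (ordS k)).1 - (v k).1),
               (v k).2 + t * ((v (ordS k)).2 - (v k).2)).
Proof. by case: sides => _ _ _ seg _ /andP[t0 t1]; rewrite seg; exists t. Qed.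

Let vertices_on_side k : [/\ C (v k), C (v (ordS k)), L k (v k) & L k (v (ordS k))].
Proof.
have [Cl Ll] := on_side k (t := 0) ltac:(by rewrite lexx ler01).
have [Cr Lr] := on_side k (t := 1) ltac:(by rewrite lexx ler01).
move: Cl Ll Cr Lr; rewrite !mul0r !addr0 !mul1r !subrKC -!surjective_pairing.
by split.
Qed.

Lemma clockwise_side_line k : exists P, [/\ S P, L k = lineP P, fline P (v k) = 0,
  fline P (v (ordS k)) = 0 & forall q, C q -> 0 <= lr_sign (side_of_O v k) * fline P q].
Proof.
have [_ side_lines v_neq seg cw] := sides.
have side : side_line C (L k) by apply/side_lines; exists k.
have sub : segment (v k) (v (ordS k)) `<=` C `&` L k by rewrite seg.
have [P SP LP] := region_side_lineP x0S S_fin side (v_neq k) sub.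
have [_ _ f0 f1] := vertices_on_side k; rewrite LP in f0 f1.
move/linePE: f0 => f0; move/linePE: f1 => f1.
by exists P; split=> //; exact: (side_of_O_fline_ge0 f0 f1 (v_neq k) (cw k)).
Qed.

Lemma consecutive_side_lines_neq0 k (P P' : pt) :
  L k = lineP P -> L (ordS k) = lineP P' ->
  fline P' (v k) != 0 /\ fline P (v (ordS (ordS k))) != 0.
Proof.
have [L_inj _ v_neq _ _] := sides => LP LP'.
have [_ _ P0 P1] := vertices_on_side k; rewrite LP in P0 P1.
have [_ _ P'1 P'2] := vertices_on_side (ordS k); rewrite LP' in P'1 P'2.
move/linePE: P0 => P0; move/linePE: P1 => P1.
move/linePE: P'1 => P'1; move/linePE: P'2 => P'2.
have PP' : P <> P'.
  move=> eP; have /L_inj e : L k = L (ordS k) by rewrite LP LP' eP.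
  by apply: (v_neq k); rewrite -e.
split; apply/eqP => f0; apply: PP'.
- exact: eq_of_common_zeros P0 P1 f0 P'1 (v_neq k).
- exact: eq_of_common_zeros P1 f0 P'1 P'2 (v_neq (ordS k)).
Qed.

Lemma clockwise_vertex k : C (v k).
Proof. by have [] := vertices_on_side k. Qed.

End ClockwiseRegion.

Section LatticeRegion.
Variable R : realType.
Local Notation pt := (R * R)%type.

Lemma rect_lattice_grid (S : set pt) : rect_lattice S ->
  exists (a b dx dy : R) (N M : nat), [/\ 0 < dx, 0 < dy &
    S = [set G | (on_grid a dx N G.1 /\ on_grid b dy M G.2) /\ G <> origin R]].
Proof.
case=> a [b [dx [dy [N [M [_ dx_gt0 dy_gt0 _ ->]]]]]].
exists a, b, dx, dy, N, M; split=> //; apply/seteqP; split=> G /= [SG GO]; split=> //.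
- by case: SG => i [j [iN jM ->]]; split; [exists i | exists j].
- case: SG => [[i iN Gi] [j jM Gj]]; exists i, j; split=> //.
  by rewrite [G]surjective_pairing Gi Gj.
Qed.

Variables (a b dx dy : R) (N M : nat).
Local Notation grid G := (on_grid a dx N G.1 /\ on_grid b dy M G.2).

Lemma grid_finite : [set G : pt | grid G] `<=`
  range (fun ij : 'I_N.+1 * 'I_M.+1 => (a + ij.1%:R * dx, b + ij.2%:R * dy)).
Proof.
move=> G [[i iN Gi] [j jM Gj]].
exists (Ordinal (iN : (i < N.+1)%N), Ordinal (jM : (j < M.+1)%N)) => //.
by rewrite [G]surjective_pairing Gi Gj.
Qed.

Hypotheses (dx_gt0 : 0 < dx) (dy_gt0 : 0 < dy).
Variables (S : set pt) (x0 : pt).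
Hypotheses (SE : S = [set G | grid G /\ G <> origin R]) (x0S : arr_complement S x0).
Local Notation C := (closure (connected_component (arr_complement S) x0)).
Variables (n : nat) (L : 'I_n -> set pt) (v : 'I_n -> pt).
Hypothesis sides : clockwise_sides C L v.

Let S_fin : S `<=` range (fun ij : 'I_N.+1 * 'I_M.+1 => (a + ij.1%:R * dx, b + ij.2%:R * dy)).
Proof. by rewrite SE => G [gG _]; apply: grid_finite. Qed.

Let signed_prod_gt0 (s x y : R) : s * s = 1 ->
  0 <= s * x -> x != 0 -> 0 <= s * y -> y != 0 -> 0 < x * y.
Proof.
move=> ss sx x_neq0 sy y_neq0; rewrite -[x * y]mul1r -ss mulrACA.
have s0 : s != 0 by apply: contra_eqN ss => /eqP ->; rewrite mul0r eq_sym oner_eq0.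
by apply: mulr_gt0; rewrite lt0r mulf_neq0.
Qed.

Let signed_prod_le0 (s x y : R) : s * s = 1 -> s * x <= 0 -> 0 <= s * y -> x * y <= 0.
Proof. by move=> ss sx sy; rewrite -[x * y]mul1r -ss mulrACA mulr_le0_ge0. Qed.

Lemma equal_three_sides_fline_ge0 k :
  side_of_O v k = side_of_O v (ordS k) -> side_of_O v (ordS k) = side_of_O v (ordS (ordS k)) ->
  forall Q, S Q -> 0 <= lr_sign (side_of_O v k) * fline Q x0.
Proof.
move=> e1 e2 Q SQ; rewrite leNgt; apply/negP => sQx0.
set s := lr_sign _ in sQx0; have ss : s * s = 1 by apply: lr_sign_sqr.
have [P1 [SP1 LP1 e10 e11 sP1]] := clockwise_side_line S_fin x0S sides k.
have [P2 [SP2 LP2 e21 e22 sP2]] := clockwise_side_line S_fin x0S sides (ordS k).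
have [P3 [SP3 LP3 e32 e33 sP3]] := clockwise_side_line S_fin x0S sides (ordS (ordS k)).
rewrite -e1 -/s in sP2; rewrite -e2 -e1 -/s in sP3.
have [f20 f12] := consecutive_side_lines_neq0 sides LP1 LP2.
have [f31 f23] := consecutive_side_lines_neq0 sides LP2 LP3.
have Cv := clockwise_vertex sides.
have sQ q : C q -> s * fline Q q <= 0.
  move=> Cq; have := region_fline_sign x0S SQ Cq.
  rewrite -[_ * _]mul1r -ss mulrACA (nmulr_rge0 _ sQx0).
  by rewrite leNgt; apply: contraNN.
have gS G : S G -> grid G by rewrite SE => -[].
apply: (grid_three_lines_contra dx_gt0 dy_gt0 (gS _ SP1) (gS _ SP2) (gS _ SP3) (gS _ SQ)
  e10 e11 e21 e22 e32 e33).
- exact: signed_prod_gt0 ss (sP3 _ (Cv _)) f31 (sP1 _ (Cv _)) f12.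
- exact: signed_prod_gt0 ss (sP2 _ (Cv _)) f20 (sP1 _ (Cv _)) f12.
- exact: signed_prod_gt0 ss (sP3 _ (Cv _)) f31 (sP2 _ (Cv _)) f23.
- move=> G gG; have [->|GO] := eqVneq G (origin R).
    by rewrite !fline_originl mulrNN mulr1; split.
  have SG : S G by rewrite SE; split=> //; apply/eqP.
  by split; apply: (region_fline_sign2 x0S SG); apply: Cv.
- exact: signed_prod_le0 ss (sQ _ (Cv _)) (sP2 _ (Cv _)).
- exact: signed_prod_le0 ss (sQ _ (Cv _)) (sP3 _ (Cv _)).
- exact: signed_prod_le0 ss (sQ _ (Cv _)) (sP1 _ (Cv _)).
Qed.

End LatticeRegion.

Unset Implicit Arguments.

Theorem lemma4p2 (R : realType) (S : set (R * R)%type) (D : set (R * R)%type) (n : nat)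
    (L : 'I_n -> set (R * R)%type) (v : 'I_n -> (R * R)%type) :
  rect_lattice S -> is_region S D -> bounded_pt D -> ~ D (origin R) ->
  clockwise_sides D L v ->
  ~ (exists k : 'I_n, side_of_O v k = side_of_O v (ordS k) /\
                      side_of_O v (ordS k) = side_of_O v (ordS (ordS k))).
Proof.
move=> /rect_lattice_grid [a [b [dx [dy [N [M [dx_gt0 dy_gt0 SE]]]]]]] [x0 [x0S ->]].
move=> Dbd DO sides [k [e1 e2]].
have [Q SQ sQ] := region_separating_line x0S (side_of_O v k) Dbd DO.
have := equal_three_sides_fline_ge0 dx_gt0 dy_gt0 SE x0S sides e1 e2 SQ.
by rewrite leNgt sQ.
Qed.
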